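(* Let $\alpha\in\mathbb{R}$ and let $\mathbb{Q}[x]^+_{x=\alpha}=\{p\in\mathbb{Q}[x]: p(\alpha)>0\}$. Suppose $\mathbb{Q}[x]^+_{x=\alpha}=H_1\sqcup H_2$ with $H_1,H_2$ disjoint nonempty subsets, each closed under addition and multiplication. Let $H_+=\{p\in\mathbb{Q}[x]^+_{x=\alpha}: p'(\alpha)>0\}$, $H_0=\{p\in\mathbb{Q}[x]^+_{x=\alpha}: p'(\alpha)=0\}$, $H_-=\{p\in\mathbb{Q}[x]^+_{x=\alpha}: p'(\alpha)<0\}$. Then either $H_1\subseteq H_+\cup H_0$ and $H_2\subseteq H_-\cup H_0$, or $H_1\subseteq H_-\cup H_0$ and $H_2\subseteq H_+\cup H_0$. *)

From HB Require Import structures.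
From mathcomp Require Import all_boot all_order all_algebra.
From mathcomp Require Import reals.
Set Implicit Arguments. Unset Strict Implicit. Unset Printing Implicit Defensive.
Import Order.TTheory GRing.Theory Num.Theory.
Local Open Scope ring_scope.

Definition evalQ (R : realType) (alpha : R) (p : {poly rat}) : R :=
  (map_poly ratr p).[alpha].

Definition Qpos (R : realType) (alpha : R) (p : {poly rat}) : Prop :=
  0 < evalQ alpha p.

Definition Hplus (R : realType) (alpha : R) (p : {poly rat}) : Prop :=
  Qpos alpha p /\ 0 < evalQ alpha p^`().
Definition Hzero (R : realType) (alpha : R) (p : {poly rat}) : Prop :=
  Qpos alpha p /\ evalQ alpha p^`() = 0.
Definition Hminus (R : realType) (alpha : R) (p : {poly rat}) : Prop :=
  Qpos alpha p /\ evalQ alpha p^`() < 0.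

From HB Require Import structures.
From mathcomp Require Import all_boot all_order all_algebra.
From mathcomp Require Import reals ring lra.
Import Order.TTheory GRing.Theory Num.Theory.
Local Open Scope ring_scope.
Set Implicit Arguments. Unset Strict Implicit. Unset Printing Implicit Defensive.

(* Say 1 lies in H1 (otherwise swap the parts).  Then H1 contains every positive
   rational constant, and both parts are closed under adding any rational constant
   that keeps the value at alpha positive: if q is in H2 and q + d were in H1,
   squaring and subtracting would force q + d/2, hence q + d/2^n, into H1, which
   fails as soon as d/2^n < q(alpha).  So the lines X - r (r < alpha) all lie in one
   part, and so do the lines s - X (s > alpha).  They cannot all lie in H2, which
   would then contain a constant, nor all in H1, by the argument below applied to
   q - k (s - X) for q in H2.  Say X - r is in H1 and s - X in H2.  Products of these
   lines give members of H1 of every degree >= 2 with leading coefficient +-1 and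
   arbitrarily small value and slope at alpha.  Subtracting multiples of them from a
   q in H2 with q'(alpha) > 0 lowers its degree while keeping it in H2 with positive
   slope, until it becomes c (X - r) with c > 0 and r < alpha, which lies in H1.
   Hence slopes on H2 are <= 0; and a p in H1 with p'(alpha) < 0 would make
   s - X - k p a member of H2 with positive slope. *)

Lemma polyE_size_le2 (K : nzSemiRingType) (p : {poly K}) :
  (size p <= 2)%N -> p = (p`_1)%:P * 'X + (p`_0)%:P.
Proof.
move=> p_le2; apply/polyP => -[|[|i]]; rewrite coefD coefCM coefX coefC //=.
- by rewrite mulr0 add0r.
- by rewrite mulr1 addr0.
by rewrite mulr0 addr0 nth_default // (leq_trans p_le2).
Qed.

Lemma size_subr_same_lead (K : nzRingType) n (p q : {poly K}) :
  size p = n.+1 -> size q = n.+1 -> lead_coef p = lead_coef q ->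
  (size (p - q)%R <= n)%N.
Proof.
move=> sizep sizeq lead_pq; apply/leq_sizeP => j; rewrite leq_eqVlt coefB.
case/orP => [/eqP <-|n_lt_j].
  by move: lead_pq; rewrite !lead_coefE sizep sizeq => ->; rewrite subrr.
by rewrite !nth_default ?subrr ?sizep ?sizeq.
Qed.

Lemma size_CsubX_MXaddC (K : nzRingType) (c d : K) :
  size ((c%:P - 'X) * 'X + d%:P) = 3.
Proof.
have size_cX : size (c%:P - 'X) = 2 by rewrite -opprB size_opp size_XsubC.
by rewrite size_MXaddC -size_poly_eq0 size_cX.
Qed.

Lemma lead_coef_CsubX_MXaddC (K : nzRingType) (c d : K) :
  lead_coef ((c%:P - 'X) * 'X + d%:P) = -1.
Proof.
have size_cX : size (c%:P - 'X) = 2 by rewrite -opprB size_opp size_XsubC.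
rewrite lead_coefDl; first by rewrite lead_coefMX -opprB lead_coefN lead_coefXsubC.
by rewrite size_mulX -?size_poly_eq0 size_cX // (leq_ltn_trans (size_polyC_leq1 d)).
Qed.

Lemma rat_gt0_natmulE (c : rat) : 0 < c ->
  exists n d : nat, [/\ (0 < n)%N, (0 < d)%N & c *+ d = n%:R].
Proof.
move=> c_gt0; exists `|numq c|%N, `|denq c|%N.
have num_gt0 : 0 < numq c by rewrite numq_gt0.
split; rewrite ?absz_gt0 ?gt_eqF ?denq_gt0 //.
by rewrite mulr_absz natr_absz !gtr0_norm ?denq_gt0 // -mulrzr numqE.
Qed.

Section Evaluation.
Variables (R : realType) (alpha : R).

Fact evalQ_comm : commr_rmorph (ratr : rat -> R) alpha.
Proof. by move=> x; apply: mulrC. Qed.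

HB.instance Definition _ :=
  GRing.RMorphism.copy (evalQ alpha) (horner_morph evalQ_comm).

Local Notation ev := (evalQ alpha).
Local Notation ev' p := (evalQ alpha p^`()).

Lemma evalQC c : ev c%:P = ratr c.
Proof. by rewrite /evalQ map_polyC hornerC. Qed.

Lemma evalQX : ev 'X = alpha.
Proof. by rewrite /evalQ map_polyX hornerX. Qed.

Lemma evalQ_XsubC r : ev ('X - r%:P) = alpha - ratr r.
Proof. by rewrite rmorphB /= evalQX evalQC. Qed.

Lemma evalQ_CsubX s : ev (s%:P - 'X) = ratr s - alpha.
Proof. by rewrite rmorphB /= evalQX evalQC. Qed.

Lemma evalQ_derivM p q : ev' (p * q) = ev' p * ev q + ev p * ev' q.
Proof. by rewrite derivM rmorphD !rmorphM /=. Qed.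

Lemma evalQ_derivCM c p : ev' (c%:P * p) = ratr c * ev' p.
Proof. by rewrite deriv_mulC rmorphM /= evalQC. Qed.

Lemma evalQ_derivXsubC r : ev' ('X - r%:P) = 1.
Proof. by rewrite derivXsubC rmorph1 /=. Qed.

Lemma evalQ_derivCsubX s : ev' (s%:P - 'X) = -1.
Proof. by rewrite derivB derivC derivX sub0r rmorphN rmorph1 /=. Qed.

Lemma exists_rat_between (a b : R) : a < b ->
  exists2 r : rat, a < ratr r & ratr r < b.
Proof. by move=> /rat_in_itvoo[r]; rewrite in_itv /= => /andP[]; exists r. Qed.

Record pos_split (A B : {poly rat} -> Prop) : Prop := PosSplit {
  pos_split_cover : forall p, Qpos alpha p <-> A p \/ B p;
  pos_split_disj : forall p, ~ (A p /\ B p);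
  pos_split_addl : forall p q, A p -> A q -> A (p + q);
  pos_split_mull : forall p q, A p -> A q -> A (p * q);
  pos_split_addr : forall p q, B p -> B q -> B (p + q);
  pos_split_mulr : forall p q, B p -> B q -> B (p * q) }.

Lemma pos_split_sym A B : pos_split A B -> pos_split B A.
Proof.
case=> cover disj *; split=> // p; first by rewrite cover; tauto.
by case=> *; apply: (disj p).
Qed.

Lemma natmul_closed (S : {poly rat} -> Prop) p n :
  (forall p q, S p -> S q -> S (p + q)) -> S p -> S (p *+ n.+1).
Proof. by move=> addS Sp; elim: n => // n IHn; rewrite mulrS; apply: addS. Qed.

Section Split.
Variables A B : {poly rat} -> Prop.
Hypothesis hAB : pos_split A B.

Lemma memA_gt0 p : A p -> 0 < ev p.
Proof. by move=> Ap; apply/(pos_split_cover hAB); left. Qed.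

Lemma memB_gt0 p : B p -> 0 < ev p.
Proof. by move=> Bp; apply/(pos_split_cover hAB); right. Qed.

Lemma memA_or_memB p : 0 < ev p -> A p \/ B p.
Proof. by move=> p_gt0; apply/(pos_split_cover hAB). Qed.

Lemma memA_memB_false p : A p -> B p -> False.
Proof. by move=> Ap Bp; apply: (pos_split_disj hAB (p := p)). Qed.

Lemma memB_sub p q : A p -> B q -> 0 < ev (q - p) -> B (q - p).
Proof.
move=> Ap Bq /memA_or_memB[] // Aqp.
by have := pos_split_addl hAB Aqp Ap; rewrite subrK => /memA_memB_false/(_ Bq).
Qed.

Lemma memA_scale c p : 0 < c -> A p -> A (c%:P * p).
Proof.
move=> c_gt0 Ap; have [n [d [n_gt0 d_gt0 cdn]]] := rat_gt0_natmulE c_gt0.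
have : 0 < ev (c%:P * p) by rewrite rmorphM /= evalQC mulr_gt0 ?ltr0q ?memA_gt0.
case/memA_or_memB => // Bcp.
have Bdcp := natmul_closed d.-1 (pos_split_addr hAB) Bcp.
have Anp := natmul_closed n.-1 (pos_split_addl hAB) Ap.
rewrite !prednK // in Bdcp Anp.
by move: Bdcp; rewrite -mulrnAl -polyCMn cdn polyC_natr mulr_natl => /(memA_memB_false Anp).
Qed.

End Split.

Lemma memA_sub A B p q : pos_split A B -> B p -> A q -> 0 < ev (q - p) -> A (q - p).
Proof. by move/pos_split_sym/memB_sub; apply. Qed.

Lemma memB_scale A B c p : pos_split A B -> 0 < c -> B p -> B (c%:P * p).
Proof. by move/pos_split_sym/memA_scale; apply. Qed.

Definition shift_closed (S : {poly rat} -> Prop) :=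
  forall q c, S q -> 0 < ev (q + c%:P) -> S (q + c%:P).

Section Constants.
Variables A B : {poly rat} -> Prop.
Hypotheses (hAB : pos_split A B) (A1 : A 1).

Lemma memA_const c : 0 < c -> A c%:P.
Proof. by move=> c_gt0; rewrite -[c%:P]mulr1; apply: (memA_scale hAB). Qed.

Lemma memB_addC_small q d : B q -> 0 < d -> ratr d < ev q -> B (q + d%:P).
Proof.
move=> Bq d_gt0 d_lt; have q_gt0 := memB_gt0 hAB Bq.
have d_gt0' : (0 : R) < ratr d by rewrite ltr0q.
have : 0 < ev (q + d%:P) by rewrite rmorphD /= evalQC addr_gt0.
case/(memA_or_memB hAB) => // Aqd; exfalso.
have Bqd : B (q - d%:P).
  by apply: (memB_sub hAB) (memA_const d_gt0) Bq _; rewrite rmorphB /= evalQC subr_gt0.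
have Asq : A ((q + d%:P) ^+ 2 - (q - d%:P) ^+ 2).
  apply: (memA_sub hAB); rewrite !expr2.
  - exact: (pos_split_mulr hAB).
  - exact: (pos_split_mull hAB).
  by rewrite rmorphB !rmorphM rmorphB rmorphD /= evalQC; nra.
apply: (memA_memB_false hAB Asq).
have -> : (q + d%:P) ^+ 2 - (q - d%:P) ^+ 2 = (4 * d)%:P * q by rewrite polyCM; ring.
by apply: (memB_scale hAB) => //; rewrite mulr_gt0.
Qed.

Lemma memA_addC_half q d : B q -> 0 < d -> A (q + d%:P) -> A (q + (d / 2)%:P).
Proof.
move=> Bq d_gt0 Aqd; have q_gt0 := memB_gt0 hAB Bq.
have d_gt0' : (0 : R) < ratr d by rewrite ltr0q.
have Asq : A ((q + d%:P) ^+ 2 - q ^+ 2).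
  apply: (memA_sub hAB); rewrite !expr2.
  - exact: (pos_split_mulr hAB).
  - exact: (pos_split_mull hAB).
  by rewrite rmorphB !rmorphM rmorphD /= evalQC; nra.
have sqE : (q + d%:P) ^+ 2 - q ^+ 2 = (2 * d)%:P * (q + (d / 2)%:P).
  rewrite mulrDr -polyCM (_ : 2 * d * (d / 2) = d * d); last by field.
  by rewrite !polyCM polyC_natr; ring.
have -> : q + (d / 2)%:P = ((2 * d)^-1)%:P * ((q + d%:P) ^+ 2 - q ^+ 2).
  by rewrite sqE mulrA -polyCM mulVf ?mul1r // mulf_neq0 // gt_eqF.
by apply: (memA_scale hAB) => //; rewrite invr_gt0 mulr_gt0.
Qed.

Lemma memB_addC q d : B q -> 0 < d -> B (q + d%:P).
Proof.
move=> Bq d_gt0; have q_gt0 := memB_gt0 hAB Bq.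
have [n d_lt] : exists n, ratr d < 2 ^+ n * ev q.
  by exists (Num.Def.archi_bound (ratr d / ev q)); rewrite -ltr_pdivrMr ?upper_nthrootP.
elim: n d d_gt0 d_lt => [|n IHn] d d_gt0 d_lt.
  by apply: memB_addC_small; rewrite // -[ev q]mul1r.
have : 0 < ev (q + d%:P) by rewrite rmorphD /= evalQC addr_gt0 ?ltr0q.
case/(memA_or_memB hAB) => // /(memA_addC_half Bq d_gt0) Aqd2; exfalso.
apply: (memA_memB_false hAB Aqd2); apply: IHn; first by rewrite divr_gt0.
by rewrite fmorph_div /= ratr_nat ltr_pdivrMr // mulrAC -exprSr.
Qed.

Lemma memB_shift : shift_closed B.
Proof.
move=> q c Bq qc_gt0; case: (ltrgt0P c) => [c_gt0|c_lt0|->]; last by rewrite addr0.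
  exact: memB_addC.
rewrite -[c]opprK polyCN in qc_gt0 *.
by apply: (memB_sub hAB) => //; apply: memA_const; rewrite oppr_gt0.
Qed.

Lemma memA_shift : shift_closed A.
Proof.
move=> q c Aq qc_gt0; case/(memA_or_memB hAB): (qc_gt0) => // Bqc; exfalso.
have := memB_shift (c := - c) Bqc; rewrite -addrA -polyCD subrr addr0.
by move=> /(_ (memA_gt0 hAB Aq)); apply: (memA_memB_false hAB Aq).
Qed.

End Constants.

Lemma shift_closed_XsubC S r0 r : shift_closed S ->
  S ('X - r0%:P) -> ratr r < alpha -> S ('X - r%:P).
Proof.
move=> shiftS Sr0 r_lt; have rE : 'X - r%:P = 'X - r0%:P + (r0 - r)%:P.
  by rewrite polyCB; ring.
by rewrite rE; apply: shiftS; rewrite // -rE evalQ_XsubC subr_gt0.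
Qed.

Lemma shift_closed_CsubX S s0 s : shift_closed S ->
  S (s0%:P - 'X) -> alpha < ratr s -> S (s%:P - 'X).
Proof.
move=> shiftS Ss0 s_gt; have sE : s%:P - 'X = s0%:P - 'X + (s - s0)%:P.
  by rewrite polyCB; ring.
by rewrite sE; apply: shiftS; rewrite // -sE evalQ_CsubX subr_gt0.
Qed.

Lemma exists_rat_below (m : R) : 0 < m ->
  exists2 r : rat, 0 < alpha - ratr r & alpha - ratr r < m.
Proof.
move=> m_gt0; have : alpha - m < alpha by rewrite ltrBlDr ltrDl.
by case/exists_rat_between => r *; exists r; lra.
Qed.

Lemma exists_rat_above (m : R) : 0 < m ->
  exists2 s : rat, 0 < ratr s - alpha & ratr s - alpha < m.
Proof.
move=> m_gt0; have : alpha < alpha + m by rewrite ltrDl.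
by case/exists_rat_between => s *; exists s; lra.
Qed.

Definition XsubC_below (S : {poly rat} -> Prop) :=
  forall r, ratr r < alpha -> S ('X - r%:P).

Definition CsubX_above (S : {poly rat} -> Prop) :=
  forall s, alpha < ratr s -> S (s%:P - 'X).

(* Members of S of degree n + 2 (size n + 3) whose value and slope at alpha are
   arbitrarily small: subtracting a multiple of one lowers the degree of any
   polynomial with the same degree at a negligible cost in value and slope. *)
Definition small_members (S : {poly rat} -> Prop) (sg : bool) (n : nat) :=
  forall eps : R, 0 < eps -> exists2 E, S E &
    [/\ size E = n.+3, lead_coef E = (-1) ^+ sg, ev E < eps & `|ev' E| < eps].

Section Reduction.
Variables A B : {poly rat} -> Prop.
Hypotheses (hAB : pos_split A B) (lowA : XsubC_below A).

Lemma small_members_mulXsubC sg n : small_members A sg n -> small_members A sg n.+1.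
Proof.
move=> smallA eps eps_gt0; have [r u_gt0 u_lt1] := exists_rat_below ltr01.
have [E AE [sizeE leadE evE ev'E]] := smallA (eps / 2) (divr_gt0 eps_gt0 (ltr0Sn _ 1)).
have E_gt0 := memA_gt0 hAB AE.
exists (('X - r%:P) * E); first by apply: (pos_split_mull hAB) AE; apply: lowA; lra.
split.
- by rewrite size_monicM ?monicXsubC ?size_XsubC ?sizeE // -size_poly_eq0 sizeE.
- by rewrite lead_coef_monicM ?monicXsubC.
- by rewrite rmorphM /= evalQ_XsubC; nra.
rewrite evalQ_derivM evalQ_derivXsubC evalQ_XsubC mul1r.
move: ev'E; rewrite !ltr_norml => /andP[? ?]; apply/andP; split; nra.
Qed.

Lemma small_members_sqr : small_members A false 0.
Proof.
move=> eps eps_gt0.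
have m_gt0 : 0 < Num.min 1 (eps / 2) by rewrite lt_min ltr01 divr_gt0.
have [r u_gt0] := exists_rat_below m_gt0; rewrite lt_min => /andP[u_lt1 u_lt].
exists (('X - r%:P) ^+ 2).
  by rewrite expr2; apply: (pos_split_mull hAB); apply: lowA; lra.
split.
- by rewrite size_exp_XsubC.
- by rewrite expr0; apply/monicP; rewrite monic_exp ?monicXsubC.
- by rewrite rmorphXn /= evalQ_XsubC; nra.
by rewrite expr2 evalQ_derivM evalQ_derivXsubC evalQ_XsubC mul1r mulr1 ger0_norm; lra.
Qed.

Lemma small_members_sub_sqr : CsubX_above B -> small_members A true 0.
Proof.
move=> upB eps eps_gt0.
have m_gt0 : 0 < Num.min 1 (eps / 4) by rewrite lt_min ltr01 divr_gt0.
have [r u_gt0] := exists_rat_below m_gt0; rewrite lt_min => /andP[u_lt1 u_lt].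
(* With u = alpha - r and v = s - alpha < u / 2, the value u^2 - 2 v^2 lies in
   (0, u^2) and the slope is 2 u + 4 v < 4 u. *)
have [s v_gt0 v_lt] := exists_rat_above (divr_gt0 u_gt0 (ltr0Sn _ 1)).
have ev2 : ratr 2 = 2 :> R by rewrite ratr_nat.
exists (('X - r%:P) ^+ 2 - 2%:P * (s%:P - 'X) ^+ 2).
  apply: (memA_sub hAB); rewrite ?expr2.
  - by apply: (memB_scale hAB) => //; apply: (pos_split_mulr hAB); apply: upB; lra.
  - by apply: (pos_split_mull hAB); apply: lowA; lra.
  by rewrite rmorphB !rmorphM /= evalQC evalQ_XsubC evalQ_CsubX ev2; nra.
have EE : ('X - r%:P) ^+ 2 - 2%:P * (s%:P - 'X) ^+ 2 =
          ((4 * s - 2 * r)%:P - 'X) * 'X + (r ^+ 2 - 2 * s ^+ 2)%:P.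
  by rewrite !rmorphB !rmorphXn !rmorphM /= !polyC_natr; ring.
split; first by rewrite EE size_CsubX_MXaddC.
- by rewrite EE lead_coef_CsubX_MXaddC.
- by rewrite rmorphB !rmorphM /= evalQC evalQ_XsubC evalQ_CsubX ev2; nra.
rewrite derivB rmorphB /= evalQ_derivCM !expr2 !evalQ_derivM evalQ_derivXsubC.
rewrite evalQ_derivCsubX evalQ_XsubC evalQ_CsubX ev2 ger0_norm; nra.
Qed.

Lemma small_members_mul_lines : CsubX_above A -> small_members A true 0.
Proof.
move=> upA eps eps_gt0.
have m_gt0 : 0 < Num.min 1 eps by rewrite lt_min ltr01.
have [r u_gt0] := exists_rat_below m_gt0; rewrite lt_min => /andP[u_lt1 u_lt].
have [s v_gt0] := exists_rat_above m_gt0; rewrite lt_min => /andP[v_lt1 v_lt].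
exists (('X - r%:P) * (s%:P - 'X)).
  by apply: (pos_split_mull hAB); [apply: lowA | apply: upA]; lra.
have EE : ('X - r%:P) * (s%:P - 'X) = ((r + s)%:P - 'X) * 'X + (- (r * s))%:P.
  by rewrite rmorphN rmorphD rmorphM /=; ring.
split; first by rewrite EE size_CsubX_MXaddC.
- by rewrite EE lead_coef_CsubX_MXaddC.
- by rewrite rmorphM /= evalQ_XsubC evalQ_CsubX; nra.
rewrite evalQ_derivM evalQ_derivXsubC evalQ_derivCsubX evalQ_XsubC evalQ_CsubX.
by rewrite ltr_norml; apply/andP; split; lra.
Qed.

Lemma small_members_all : small_members A true 0 -> forall sg n, small_members A sg n.
Proof.
move=> negA sg; elim=> [|n IHn]; last exact: small_members_mulXsubC.
by case: sg => //; apply: small_members_sqr.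
Qed.

Lemma memB_deriv_gt0_lower n Q : (forall sg, small_members A sg n) ->
  B Q -> 0 < ev' Q -> size Q = n.+3 ->
  exists Q', [/\ B Q', (size Q' <= n.+2)%N & 0 < ev' Q'].
Proof.
move=> smallA BQ dQ_gt0 sizeQ; set a := lead_coef Q.
have a_neq0 : a != 0 by rewrite lead_coef_eq0 -size_poly_eq0 sizeQ.
have Q_gt0 := memB_gt0 hAB BQ.
have lam_gt0 : (0 : R) < ratr `|a| by rewrite ltr0q normr_gt0.
have m_gt0 : 0 < Num.min (ev Q) (ev' Q) by rewrite lt_min Q_gt0.
have [m_le m_le'] : Num.min (ev Q) (ev' Q) <= ev Q /\ Num.min (ev Q) (ev' Q) <= ev' Q.
  by rewrite !ge_min !lexx orbT.
have [E AE [sizeE leadE evE ev'E]] := smallA (a < 0) _ (divr_gt0 m_gt0 lam_gt0).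
move: evE ev'E; rewrite !(ltr_pdivlMr _ _ lam_gt0) => evE ev'E.
have ev'E_le := ler_wpM2l (ltW lam_gt0) (ler_norm (ev' E)).
exists (Q - `|a|%:P * E); split.
- apply: (memB_sub hAB) => //; first by apply: (memA_scale hAB); rewrite ?normr_gt0.
  by rewrite rmorphB rmorphM /= evalQC; nra.
- apply: size_subr_same_lead; rewrite // mul_polyC ?size_scale ?normr_eq0 //.
  by rewrite lead_coefZ leadE mulrC mulr_sign_norm.
by rewrite derivB rmorphB /= evalQ_derivCM; lra.
Qed.

Lemma memB_deriv_gt0_size_le2 Q : (forall sg n, small_members A sg n) ->
  B Q -> 0 < ev' Q -> exists Q', [/\ B Q', (size Q' <= 2)%N & 0 < ev' Q'].
Proof.
move=> smallA; have [k] := ubnP (size Q); elim: k Q => // k IHk Q sizeQ BQ dQ_gt0.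
case: (leqP (size Q) 2) => [|size_gt2]; first by exists Q.
have sizeQE : size Q = (size Q - 3).+3 by rewrite -addn3 subnK.
have [Q' [BQ' sizeQ' dQ'_gt0]] := memB_deriv_gt0_lower (smallA ^~ _) BQ dQ_gt0 sizeQE.
apply: IHk BQ' dQ'_gt0; rewrite ltnS in sizeQ; apply: leq_trans sizeQ.
by rewrite sizeQE ltnS.
Qed.

Lemma memB_deriv_le0 Q : small_members A true 0 -> B Q -> ev' Q <= 0.
Proof.
move=> /small_members_all smallA BQ; rewrite leNgt; apply/negP => dQ_gt0.
have [Q' [BQ' sizeQ' dQ'_gt0]] := memB_deriv_gt0_size_le2 smallA BQ dQ_gt0.
have Q'_gt0 := memB_gt0 hAB BQ'.
move: BQ' dQ'_gt0 Q'_gt0; rewrite (polyE_size_le2 sizeQ').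
set c1 := Q'`_1; set c0 := Q'`_0.
rewrite derivD derivC addr0 evalQ_derivCM derivX rmorph1 /= mulr1 => BQ' c1_gt0.
rewrite rmorphD rmorphM /= evalQX !evalQC => Q'_gt0.
have c1_gt0' : 0 < c1 by rewrite -(ltr0q R).
have Q'E : c1%:P * 'X + c0%:P = c1%:P * ('X - (- c0 / c1)%:P).
  by rewrite mulrBr -polyCM mulrCA divff ?gt_eqF // mulr1 polyCN opprK.
apply: (memA_memB_false hAB _ BQ'); rewrite Q'E.
apply: (memA_scale hAB c1_gt0'); apply: lowA.
by rewrite fmorph_div rmorphN /= ltr_pdivrMr //; nra.
Qed.

Lemma memA_deriv_ge0 P : small_members A true 0 -> CsubX_above B -> A P -> 0 <= ev' P.
Proof.
move=> negA upB AP; rewrite leNgt; apply/negP => dP_lt0; have P_gt0 := memA_gt0 hAB AP.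
have [k k_gt _] : exists2 k : rat, (- ev' P)^-1 < ratr k & ratr k < (- ev' P)^-1 + 1.
  by apply: exists_rat_between; rewrite ltrDl.
have k_gt0' : (0 : R) < ratr k by rewrite (lt_trans _ k_gt) // invr_gt0 oppr_gt0.
have k_gt0 : 0 < k by rewrite -(ltr0q R).
have kdP : 1 < ratr k * (- ev' P) by rewrite -ltr_pdivrMr ?oppr_gt0 // div1r.
have kP_gt0 : 0 < ratr k * ev P by rewrite mulr_gt0.
have : alpha + ratr k * ev P < alpha + ratr k * ev P + 1 by rewrite ltrDl.
case/exists_rat_between => s s_gt _.
have BQ : B (s%:P - 'X - k%:P * P).
  apply: (memB_sub hAB); first exact: (memA_scale hAB).
    by apply: upB; lra.
  by rewrite rmorphB rmorphM /= evalQ_CsubX evalQC; lra.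
have := memB_deriv_le0 negA BQ.
by rewrite derivB rmorphB /= evalQ_derivCsubX evalQ_derivCM; lra.
Qed.

End Reduction.

Lemma deriv_signs_of_lines A B : pos_split A B -> XsubC_below A -> CsubX_above B ->
  (forall p, A p -> 0 <= ev' p) /\ (forall p, B p -> ev' p <= 0).
Proof.
move=> hAB lowA upB; have negA := small_members_sub_sqr hAB lowA upB.
split=> p; first exact: (memA_deriv_ge0 hAB lowA negA upB).
exact: (memB_deriv_le0 hAB lowA negA).
Qed.

Lemma lines_memA_memB_false A B q : pos_split A B ->
  XsubC_below A -> CsubX_above A -> B q -> False.
Proof.
move=> hAB lowA upA Bq; have negA := small_members_mul_lines hAB lowA upA.
have q_gt0 := memB_gt0 hAB Bq.
have [k k_gt _] : exists2 k : rat, `|ev' q| < ratr k & ratr k < `|ev' q| + 1.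
  by apply: exists_rat_between; rewrite ltrDl.
have k_gt0' : (0 : R) < ratr k by apply: le_lt_trans k_gt.
have k_gt0 : 0 < k by rewrite -(ltr0q R).
have [s v_gt0 v_lt] := exists_rat_above (divr_gt0 q_gt0 k_gt0').
rewrite ltr_pdivlMr // in v_lt.
have BQ : B (q - k%:P * (s%:P - 'X)).
  apply: (memB_sub hAB) => //; first by apply: (memA_scale hAB) => //; apply: upA; lra.
  by rewrite rmorphB rmorphM /= evalQ_CsubX evalQC; nra.
have := memB_deriv_le0 hAB lowA negA BQ; have := ler_norm (- ev' q); rewrite normrN.
by rewrite derivB rmorphB /= evalQ_derivCM evalQ_derivCsubX; lra.
Qed.

Lemma pos_split_deriv_signs A B q : pos_split A B -> A 1 -> B q ->
  ((forall p, A p -> 0 <= ev' p) /\ (forall p, B p -> ev' p <= 0)) \/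
  ((forall p, A p -> ev' p <= 0) /\ (forall p, B p -> 0 <= ev' p)).
Proof.
move=> hAB A1 Bq; have shiftA := memA_shift hAB A1; have shiftB := memB_shift hAB A1.
have [r0 u_gt0 _] := exists_rat_below ltr01; have [s0 v_gt0 _] := exists_rat_above ltr01.
have low S : shift_closed S -> S ('X - r0%:P) -> XsubC_below S.
  by move=> shiftS Sr0 r; apply: shift_closed_XsubC shiftS Sr0.
have up S : shift_closed S -> S (s0%:P - 'X) -> CsubX_above S.
  by move=> shiftS Ss0 s; apply: shift_closed_CsubX shiftS Ss0.
have /(memA_or_memB hAB)[Ar|Br] : 0 < ev ('X - r0%:P) by rewrite evalQ_XsubC.
all: have /(memA_or_memB hAB)[As|Bs] : 0 < ev (s0%:P - 'X) by rewrite evalQ_CsubX.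
- by case: (lines_memA_memB_false hAB (low _ shiftA Ar) (up _ shiftA As) Bq).
- by left; apply: deriv_signs_of_lines hAB (low _ shiftA Ar) (up _ shiftB Bs).
- have [] := deriv_signs_of_lines (pos_split_sym hAB) (low _ shiftB Br) (up _ shiftA As).
  by right.
have := pos_split_addr hAB Br Bs.
have -> : 'X - r0%:P + (s0%:P - 'X) = (s0 - r0)%:P by rewrite polyCB; ring.
have r0_lt_s0 : 0 < s0 - r0 by rewrite subr_gt0 -(ltr_rat R); lra.
by move/(memA_memB_false hAB (memA_const hAB A1 r0_lt_s0)).
Qed.

Lemma Hplus_or_Hzero p : Qpos alpha p -> 0 <= ev' p -> Hplus alpha p \/ Hzero alpha p.
Proof. by move=> p_gt0; rewrite le_eqVlt => /orP[/eqP dp0|dp_gt0]; [right | left]. Qed.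

Lemma Hminus_or_Hzero p : Qpos alpha p -> ev' p <= 0 -> Hminus alpha p \/ Hzero alpha p.
Proof. by move=> p_gt0; rewrite le_eqVlt => /orP[/eqP dp0|dp_lt0]; [right | left]. Qed.

Lemma pos_split_Hsigns A B q : pos_split A B -> A 1 -> B q ->
  ((forall p, A p -> Hplus alpha p \/ Hzero alpha p) /\
   (forall p, B p -> Hminus alpha p \/ Hzero alpha p)) \/
  ((forall p, A p -> Hminus alpha p \/ Hzero alpha p) /\
   (forall p, B p -> Hplus alpha p \/ Hzero alpha p)).
Proof.
move=> hAB A1 Bq; have posA := memA_gt0 hAB; have posB := memB_gt0 hAB.
case: (pos_split_deriv_signs hAB A1 Bq) => -[signA signB]; [left | right]; split=> p Sp.
- exact: Hplus_or_Hzero (posA _ Sp) (signA _ Sp).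
- exact: Hminus_or_Hzero (posB _ Sp) (signB _ Sp).
- exact: Hminus_or_Hzero (posA _ Sp) (signA _ Sp).
- exact: Hplus_or_Hzero (posB _ Sp) (signB _ Sp).
Qed.

End Evaluation.

Theorem proposition4p1 (R : realType) (alpha : R) (H1 H2 : {poly rat} -> Prop) :
  (forall p, Qpos alpha p <-> (H1 p \/ H2 p)) ->
  (forall p, ~ (H1 p /\ H2 p)) ->
  (exists p, H1 p) -> (exists p, H2 p) ->
  (forall p q, H1 p -> H1 q -> H1 (p + q)) ->
  (forall p q, H1 p -> H1 q -> H1 (p * q)) ->
  (forall p q, H2 p -> H2 q -> H2 (p + q)) ->
  (forall p q, H2 p -> H2 q -> H2 (p * q)) ->
  ((forall p, H1 p -> Hplus alpha p \/ Hzero alpha p) /\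
   (forall p, H2 p -> Hminus alpha p \/ Hzero alpha p)) \/
  ((forall p, H1 p -> Hminus alpha p \/ Hzero alpha p) /\
   (forall p, H2 p -> Hplus alpha p \/ Hzero alpha p)).
Proof.
move=> cover disj [p1 H1p1] [p2 H2p2] add1 mul1 add2 mul2.
have split12 : pos_split alpha H1 H2 by split.
have [H1_1|H2_1] : H1 1 \/ H2 1 by apply/cover; rewrite /Qpos rmorph1 ltr01.
  exact: pos_split_Hsigns split12 H1_1 H2p2.
by case: (pos_split_Hsigns (pos_split_sym split12) H2_1 H1p1) => -[]; [right | left].
Qed.
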